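(* Let $\mathcal{H}$ be a real Hilbert space, let $A\colon \mathcal{H}\rightrightarrows\mathcal{H}$ be maximally monotone, let $B\colon \mathcal{H}\to\mathcal{H}$ be monotone and $L_1$-Lipschitz, and let $C\colon \mathcal{H}\to\mathcal{H}$ be $1/L_2$-cocoercive. Suppose that $(A+B+C)^{-1}(0)\neq\varnothing$ and $\lambda\in\left(0,\frac{2}{4L_1+L_2}\right)$. Given $x_0,x_{-1}\in\mathcal{H}$, define the sequence $(x_k)$ by $$x_{k+1} = J_{\lambda A}\bigl(x_k - 2\lambda B(x_k) + \lambda B(x_{k-1}) -\lambda C(x_k) \bigr) \quad\forall k\in\mathbb{N}.$$ Then $(x_k)$ converges weakly to a point contained in $(A+B+C)^{-1}(0)$.
   Context: $J_{\lambda A}:=(I+\lambda A)^{-1}$ is the resolvent. $C$ is $1/L_2$-cocoercive if $\langle x-y,C(x)-C(y)\rangle\geq \frac{1}{L_2}\|C(x)-C(y)\|^2$ for all $x,y\in\mathcal{H}$. *)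

From HB Require Import structures.
From mathcomp Require Import all_boot all_order all_algebra.
From mathcomp Require Import all_classical all_reals all_analysis.
Set Implicit Arguments. Unset Strict Implicit. Unset Printing Implicit Defensive.
Import Order.TTheory GRing.Theory Num.Theory.
Import numFieldNormedType.Exports.
Local Open Scope classical_set_scope.
Local Open Scope ring_scope.

(* A real Hilbert space is a complete normed space whose norm comes from
   an inner product [ip]: symmetric, linear in the first argument, and
   ip x x = |x|^2. *)
Definition is_inner_product (R : realType) (H : normedModType R)
  (ip : H -> H -> R) : Prop :=
  (forall x y, ip x y = ip y x) /\
  (forall (a : R) (x y z : H), ip (a *: x + y) z = a * ip x z + ip y z) /\
  (forall x, ip x x = `|x| ^+ 2).

Definition monotone_op (R : realType) (H : normedModType R)
  (ip : H -> H -> R) (A : H -> set H) : Prop :=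
  forall x y u v, A x u -> A y v -> 0 <= ip (x - y) (u - v).

Definition maximally_monotone (R : realType) (H : normedModType R)
  (ip : H -> H -> R) (A : H -> set H) : Prop :=
  monotone_op ip A /\
  forall A' : H -> set H, monotone_op ip A' ->
    (forall x, A x `<=` A' x) -> A' = A.

Definition monotone_fun (R : realType) (H : normedModType R)
  (ip : H -> H -> R) (B : H -> H) : Prop :=
  forall x y, 0 <= ip (x - y) (B x - B y).

Definition lipschitz_with (R : realType) (H : normedModType R)
  (L : R) (B : H -> H) : Prop :=
  forall x y, `|B x - B y| <= L * `|x - y|.

Definition cocoercive_inv (R : realType) (H : normedModType R)
  (ip : H -> H -> R) (L : R) (C : H -> H) : Prop :=
  forall x y, L^-1 * `|C x - C y| ^+ 2 <= ip (x - y) (C x - C y).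

(* p belongs to the (relational) resolvent J_{lam A} z = (I + lam A)^{-1} z,
   i.e. z ∈ p + lam A p. *)
Definition in_resolvent (R : realType) (H : normedModType R)
  (lam : R) (A : H -> set H) (z p : H) : Prop :=
  exists u, A p u /\ z = p + lam *: u.

Definition zero_ABC (R : realType) (H : normedModType R)
  (A : H -> set H) (B C : H -> H) (p : H) : Prop :=
  exists u, A p u /\ u + B p + C p = 0.

Definition weakly_converges (R : realType) (H : normedModType R)
  (ip : H -> H -> R) (x : nat -> H) (p : H) : Prop :=
  forall w : H, (fun k => ip (x k) w) @ \oo --> ip p w.

From HB Require Import structures.
From mathcomp Require Import all_boot all_order all_algebra.
From mathcomp Require Import all_classical all_reals all_analysis.
From mathcomp Require Import ring lra.
Import Order.TTheory GRing.Theory Num.Theory.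
Import numFieldNormedType.Exports.
Local Open Scope classical_set_scope.
Local Open Scope ring_scope.
Set Implicit Arguments. Unset Strict Implicit. Unset Printing Implicit Defensive.

(* For every zero [z] of [A + B + C] the energy
     lyap z k = |x_k - z|^2 - 2 lam <B x_k - B x_(k-1), x_k - z> + lam L1 |x_k - x_(k-1)|^2
   decreases by at least (1 - lam (4 L1 + L2) / 2) |x_(k+1) - x_k|^2 per step and is
   bounded below by (1 - lam L1) |x_k - z|^2.  Hence the iterates are bounded,
   successive differences vanish and |x_k - z| converges.  Weak convergence then
   follows from Opial's lemma, proved here without weak compactness through
   asymptotic centres: the asymptotic centre of any subsequence is a zero (the
   iteration is an approximate variational inequality, closed by Minty's trick),
   and two distinct zeros cannot both be asymptotic centres.  Resolvents exist by
   Minty's theorem, obtained by minimising the Fitzpatrick function plus half the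
   squared norm with the parallelogram law and completeness. *)

Section RealFacts.
Variable R : realType.

Lemma le_of_le_add_small_mul (a b K : R) :
  (forall e, 0 < e -> e < 1 -> a <= b + e * K) -> a <= b.
Proof.
move=> h; apply/ler_addgt0Pr => e e0.
have K1 : 0 < `|K| + 1 by rewrite ltr_pwDr // normr_ge0.
pose d := Num.min (2^-1) (e / (`|K| + 1)).
have d0 : 0 < d by rewrite lt_min invr_gt0 ltr0n divr_gt0.
have d1 : d < 1 by rewrite gt_min invf_lt1 // ltr1n.
have dK : d * K <= e.
  apply: le_trans (ler_norm _) _; rewrite normrM gtr0_norm //.
  have : d <= e / (`|K| + 1) by rewrite ge_min lexx orbT.
  rewrite ler_pdivlMr // => hd.
  by apply: le_trans _ hd; rewrite ler_pM2l // lerDl.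
by have := h d d0 d1; lra.
Qed.

Lemma exists_small_mul_le (K e : R) : 0 <= K -> 0 < e ->
  exists eta, [/\ 0 < eta, eta <= 1 & eta * K <= e].
Proof.
move=> K0 e0; have K1 : 0 < K + 1 by lra.
exists (Num.min 1 (e / (K + 1))); split; first by rewrite lt_min ltr01 divr_gt0.
  by rewrite ge_min lexx.
have hm : Num.min 1 (e / (K + 1)) <= e / (K + 1) by rewrite ge_min lexx orbT.
apply: le_trans (ler_wpM2r K0 hm) _.
rewrite mulrAC ler_pdivrMr //; nra.
Qed.

Lemma invSn_lt_eventually (t : R) : 0 < t ->
  exists N, forall n, (N <= n)%N -> n.+1%:R^-1 < t.
Proof.
move=> t0; have [k hk] := ltr_add_invr t0; exists k => n hn.
rewrite add0r in hk; apply: le_lt_trans hk.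
by rewrite lef_pV2 ?posrE // ler_nat ltnS.
Qed.

End RealFacts.

Lemma cauchy_seq_cvg (R : realType) (V : completeNormedModType R) (v : nat -> V) :
  (forall e, 0 < e -> exists N, forall n m, (N <= n)%N -> (N <= m)%N -> `|v n - v m| < e) ->
  exists l, forall e, 0 < e -> exists N, forall n, (N <= n)%N -> `|v n - l| < e.
Proof.
move=> hc.
have cv : cvg (v @ \oo).
  apply/cauchy_cvgP/cauchy_ballP => e e0.
  have [N hN] := hc e e0.
  pose tail := [set v n | n in [set n | (N <= n)%N]].
  exists (tail, tail); first by split; exists N => // n hn; exists n.
  by move=> [_ _] [/= [n hn <-] [m hm <-]]; rewrite -ball_normE /ball_ /= hN.
exists (lim (v @ \oo)) => e e0.
have [N _ hN] := (cvgrPdist_lt _ _).1 cv e e0.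
by exists N => n hn; rewrite distrC; apply: hN.
Qed.

Section MidpointConvexInfimum.
Variables (R : realType) (V : completeNormedModType R).
Variables (Q : V -> V -> R -> Prop) (k : R).
Hypothesis k_gt0 : 0 < k.
Hypothesis Q_midpoint : forall a1 a2 b1 b2 c1 c2, Q a1 a2 c1 -> Q b1 b2 c2 ->
  exists c, Q (2^-1 *: (a1 + b1)) (2^-1 *: (a2 + b2)) c /\
    c <= (c1 + c2) / 2 - k * (`|a1 - b1| ^+ 2 + `|a2 - b2| ^+ 2).

Lemma infimizing_seq_cauchy (m : R) (f : nat -> V * V * R) :
  (forall v w c, Q v w c -> m <= c) ->
  (forall n, Q (f n).1.1 (f n).1.2 (f n).2 /\ (f n).2 < m + n.+1%:R^-1) ->
  forall e, 0 < e -> exists N, forall n p, (N <= n)%N -> (N <= p)%N ->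
    `|(f n).1.1 - (f p).1.1| < e /\ `|(f n).1.2 - (f p).1.2| < e.
Proof.
move=> hm hf e e0.
have [N hN] := invSn_lt_eventually (mulr_gt0 k_gt0 (mulr_gt0 e0 e0)).
exists N => n p hn hp.
have [hn1 hn2] := hf n; have [hp1 hp2] := hf p.
have [c [hc1 hc2]] := Q_midpoint hn1 hp1.
have hmc := hm _ _ _ hc1.
have i1 : n.+1%:R^-1 <= N.+1%:R^-1 :> R by rewrite lef_pV2 ?posrE // ler_nat ltnS.
have i2 : p.+1%:R^-1 <= N.+1%:R^-1 :> R by rewrite lef_pV2 ?posrE // ler_nat ltnS.
have hNN := hN N (leqnn N).
have d0 := normr_ge0 ((f n).1.1 - (f p).1.1).
have d0' := normr_ge0 ((f n).1.2 - (f p).1.2).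
move: hc2; set d := `|(f n).1.1 - _|; set d' := `|(f n).1.2 - _| => hc2.
have : k * (d ^+ 2 + d' ^+ 2) < k * (e * e).
  move: hc2 hNN hmc i1 i2 hn2 hp2.
  move: (n.+1%:R^-1 : R) (p.+1%:R^-1 : R) (N.+1%:R^-1 : R) => a1 a2 a3.
  clearbody d d'; lra.
rewrite ltr_pM2l // => hd.
split; nra.
Qed.

Lemma midpoint_convex_approx_min :
  (exists v w c, Q v w c) -> (exists m0, forall v w c, Q v w c -> m0 <= c) ->
  exists vs ws m, (forall v w c, Q v w c -> m <= c) /\
    (forall e, 0 < e -> exists v w c,
       [/\ Q v w c, c <= m + e, `|v - vs| < e & `|w - ws| < e]).
Proof.
move=> [v0 [w0 [c0 hv0]]] [m0 hm0].
pose E := [set c | exists v w, Q v w c].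
have hinf : has_inf E.
  split; first by exists c0, v0, w0.
  by exists m0 => c [v [w hv]]; exact: hm0 hv.
pose m := inf E.
have hm : forall v w c, Q v w c -> m <= c.
  by move=> v w c hv; apply: (ge_inf hinf.2); exists v, w.
have hseq : forall n : nat, exists p : V * V * R,
    Q p.1.1 p.1.2 p.2 /\ p.2 < m + n.+1%:R^-1.
  move=> n; have hp : 0 < (n.+1%:R : R)^-1 by rewrite invr_gt0 ltr0Sn.
  have [c [v [w hv]] hc] := inf_adherent hp hinf.
  by exists (v, w, c).
have [f hf] := choice hseq.
have hcau := infimizing_seq_cauchy hm hf.
have [vs hvs] := cauchy_seq_cvg (fun e e0 => let: ex_intro N hN := hcau e e0 in
   ex_intro _ N (fun n p hn hp => (hN n p hn hp).1)).
have [ws hws] := cauchy_seq_cvg (fun e e0 => let: ex_intro N hN := hcau e e0 in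
   ex_intro _ N (fun n p hn hp => (hN n p hn hp).2)).
exists vs, ws, m; split => // e e0.
have [N1 hN1] := hvs e e0; have [N2 hN2] := hws e e0.
have [N3 hN3] := invSn_lt_eventually e0.
pose M := maxn (maxn N1 N2) N3.
exists (f M).1.1, (f M).1.2, (f M).2.
have [h1 h2] := hf M.
have hM3 := hN3 M (leq_maxr _ _).
split => //; first (move: h2 hM3; set t := (M.+1%:R^-1 : R); lra).
  by apply: hN1; rewrite /M !leq_max leqnn.
by apply: hN2; rewrite /M !leq_max leqnn orbT.
Qed.

End MidpointConvexInfimum.

Section InnerProduct.
Variables (R : realType) (H : normedModType R) (ip : H -> H -> R).
Hypothesis hip : is_inner_product ip.

Lemma ipC x y : ip x y = ip y x.
Proof. by case: hip. Qed.

Lemma ipDl x y z : ip (x + y) z = ip x z + ip y z.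
Proof. by case: hip => _ [h _]; have := h 1 x y z; rewrite scale1r mul1r. Qed.

Lemma ip0l z : ip 0 z = 0.
Proof. by have := ipDl 0 0 z; rewrite addr0; lra. Qed.

Lemma ipZl a x z : ip (a *: x) z = a * ip x z.
Proof. by case: hip => _ [h _]; have := h a x 0 z; rewrite addr0 ip0l addr0. Qed.

Lemma ipxx x : ip x x = `|x| ^+ 2.
Proof. by case: hip => _ []. Qed.

Lemma ipNl x z : ip (- x) z = - ip x z.
Proof. by rewrite -scaleN1r ipZl mulN1r. Qed.

Lemma ipBl x y z : ip (x - y) z = ip x z - ip y z.
Proof. by rewrite ipDl ipNl. Qed.

Lemma ipDr x y z : ip z (x + y) = ip z x + ip z y.
Proof. by rewrite ipC ipDl ipC (ipC y). Qed.

Lemma ipZr a x z : ip z (a *: x) = a * ip z x.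
Proof. by rewrite ipC ipZl ipC. Qed.

Lemma ipNr x z : ip z (- x) = - ip z x.
Proof. by rewrite ipC ipNl ipC. Qed.

Lemma ipBr x y z : ip z (x - y) = ip z x - ip z y.
Proof. by rewrite ipDr ipNr. Qed.

Lemma ip0r z : ip z 0 = 0.
Proof. by rewrite ipC ip0l. Qed.

Lemma sqr_normD x y : `|x + y| ^+ 2 = `|x| ^+ 2 + 2 * ip x y + `|y| ^+ 2.
Proof. by rewrite -!ipxx ipDl !ipDr (ipC y x); ring. Qed.

Lemma sqr_normB x y : `|x - y| ^+ 2 = `|x| ^+ 2 - 2 * ip x y + `|y| ^+ 2.
Proof. by rewrite sqr_normD ipNr normrN; ring. Qed.

Lemma subr_sqr_norm x y : `|x| ^+ 2 - `|y| ^+ 2 = ip (x - y) (x + y).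
Proof. by rewrite -!ipxx ipBl !ipDr (ipC y x); ring. Qed.

Lemma sqr_norm_convex (x y : H) (t : R) : `|(1 - t) *: x + t *: y| ^+ 2 =
  (1 - t) * `|x| ^+ 2 + t * `|y| ^+ 2 - t * (1 - t) * `|x - y| ^+ 2.
Proof. by rewrite -!ipxx !ipDl !ipDr !ipZl !ipZr !ipNl !ipNr (ipC y x); ring. Qed.

Lemma sqr_norm_midpoint (x y : H) : `|2^-1 *: (x + y)| ^+ 2 =
  (`|x| ^+ 2 + `|y| ^+ 2) / 2 - `|x - y| ^+ 2 / 4.
Proof.
by rewrite -!ipxx !ipZl !ipZr !ipDl !ipDr !ipNl !ipNr (ipC y x); field; rewrite ?pnatr_eq0.
Qed.

Lemma ip_three_point x y z :
  2 * ip (x - z) (y - x) = `|y - z| ^+ 2 - `|x - z| ^+ 2 - `|x - y| ^+ 2.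
Proof. by rewrite -!ipxx !ipBl !ipBr (ipC y x) (ipC z x) (ipC z y); ring. Qed.

Lemma ip_young x y (s : R) : 0 < s ->
  2 * ip x y <= s * `|x| ^+ 2 + s^-1 * `|y| ^+ 2.
Proof.
move=> s0.
have h : 0 <= s^-1 * `|s *: x - y| ^+ 2 by rewrite mulr_ge0 ?sqr_ge0 // invr_ge0 ltW.
rewrite sqr_normB normrZ ipZl exprMn gtr0_norm // in h.
have e : s^-1 * (s ^+ 2 * `|x| ^+ 2 - 2 * (s * ip x y) + `|y| ^+ 2) =
    s * `|x| ^+ 2 - 2 * ip x y + s^-1 * `|y| ^+ 2 by field; rewrite gt_eqF.
by rewrite e in h; lra.
Qed.

Lemma ip_le_normM x y : ip x y <= `|x| * `|y|.
Proof.
have [->|x0] := eqVneq x 0; first by rewrite ip0l normr0 mul0r.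
have [->|y0] := eqVneq y 0; first by rewrite ip0r normr0 mulr0.
have xp : 0 < `|x| by rewrite normr_gt0.
have yp : 0 < `|y| by rewrite normr_gt0.
have := ip_young x y (divr_gt0 yp xp); rewrite invf_div.
have -> : `|y| / `|x| * `|x| ^+ 2 = `|x| * `|y|.
  by rewrite expr2 mulrA divfK ?gt_eqF // mulrC.
have -> : `|x| / `|y| * `|y| ^+ 2 = `|x| * `|y|.
  by rewrite expr2 mulrA divfK ?gt_eqF.
lra.
Qed.

Lemma lipschitz_ip_le (L : R) (B : H -> H) : lipschitz_with L B ->
  forall p q r, ip p (B q - B r) <= `|p| * (L * `|q - r|).
Proof.
move=> hB p q r; apply: le_trans (ip_le_normM _ _) _.
by apply: ler_wpM2l => //; exact: hB.
Qed.

Lemma lipschitz_ip_ge (L : R) (B : H -> H) : 0 <= L -> lipschitz_with L B ->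
  forall p q r, - (L / 2 * (`|p| ^+ 2 + `|q - r| ^+ 2)) <= ip p (B q - B r).
Proof.
move=> L0 hB p q r.
have := lipschitz_ip_le hB (- p) q r; rewrite ipNl normrN.
have := sqr_ge0 (`|p| - `|q - r|).
move: (`|p|) (`|q - r|) (ip p _) => a b c hab h.
have h2 : a * b <= (a ^+ 2 + b ^+ 2) / 2 by lra.
have := ler_wpM2l L0 h2.
have -> : L / 2 * (a ^+ 2 + b ^+ 2) = L * ((a ^+ 2 + b ^+ 2) / 2) by ring.
have e : a * (L * b) = L * (a * b) by ring.
by rewrite e in h; lra.
Qed.

Lemma cocoercive_lipschitz (L : R) (C : H -> H) : 0 < L ->
  cocoercive_inv ip L C -> lipschitz_with L C.
Proof.
move=> L0 hC x y.
have := le_trans (hC x y) (ip_le_normM _ _).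
have := normr_ge0 (C x - C y); have := normr_ge0 (x - y).
move: `|C x - C y| `|x - y| => w d d0 w0 h.
have {}h : w * w <= L * (d * w).
  by have := ler_wpM2l (ltW L0) h; rewrite mulrA mulfV ?gt_eqF // mul1r expr2.
have [->|wn] := eqVneq w 0; first by rewrite mulr_ge0 // ltW.
have wp : 0 < w by rewrite lt_def wn w0.
by rewrite -(ler_pM2r wp) -mulrA.
Qed.

Lemma cocoercive_ip_ge (L : R) (C : H -> H) : 0 < L -> cocoercive_inv ip L C ->
  forall p x y, - (L / 4 * `|p| ^+ 2) <= ip (x - y) (C x - C y) + ip p (C x - C y).
Proof.
move=> L0 hC p x y.
have h1 := hC x y.
have h2 : - ip p (C x - C y) <= `|p| * `|C x - C y|.
  by rewrite -ipNl -(normrN p) ip_le_normM.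
move: h1 h2; move: (`|p|) (`|C x - C y|) (ip (x - y) _) (ip p _) => d w r1 r2 h1 h2.
have : 0 <= L^-1 * (w - L * d / 2) ^+ 2 by rewrite mulr_ge0 ?sqr_ge0 // invr_ge0 ltW.
have -> : L^-1 * (w - L * d / 2) ^+ 2 = L^-1 * w ^+ 2 - w * d + L / 4 * d ^+ 2.
  by field; rewrite gt_eqF.
lra.
Qed.

Lemma monotoneD_cocoercive (L : R) (B C : H -> H) : 0 < L ->
  monotone_fun ip B -> cocoercive_inv ip L C -> monotone_fun ip (fun x => B x + C x).
Proof.
move=> L0 hB hC x y; rewrite opprD addrACA ipDr.
have := hB x y.
have : 0 <= ip (x - y) (C x - C y).
  by apply: le_trans (hC x y); rewrite mulr_ge0 ?sqr_ge0 // invr_ge0 ltW.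
lra.
Qed.

Lemma lipschitzD (L1 L2 : R) (B C : H -> H) : lipschitz_with L1 B ->
  lipschitz_with L2 C -> lipschitz_with (L1 + L2) (fun x => B x + C x).
Proof.
move=> hB hC x y; rewrite opprD addrACA mulrDl.
by apply: le_trans (ler_normD _ _) _; apply: lerD.
Qed.

End InnerProduct.

Section Minty.
Variables (R : realType) (H : completeNormedModType R) (ip : H -> H -> R).
Hypothesis hip : is_inner_product ip.
Variable G : H -> H -> Prop.
Hypothesis G_mono : forall x y u v, G x u -> G y v -> 0 <= ip (x - y) (u - v).
Hypothesis G_max : forall x u,
  (forall y v, G y v -> 0 <= ip (x - y) (u - v)) -> G x u.

(* [fitz_ub x u c]: [c] bounds the Fitzpatrick function of [G] at [(x, u)]
   plus [(|x|^2 + |u|^2) / 2]; a minimiser [(x, u)] of this convex function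
   satisfies [u = - x] and lies in the graph. *)
Definition fitz_term (y v x u : H) := ip x v + ip y u - ip y v.
Definition fitz_ub (x u : H) (c : R) :=
  forall y v, G y v -> fitz_term y v x u + (`|x| ^+ 2 + `|u| ^+ 2) / 2 <= c.

Lemma fitz_term_graph y v x u : G y v -> G x u -> fitz_term y v x u <= ip x u.
Proof.
move=> gy gx; have := G_mono gx gy.
by rewrite /fitz_term !(ipBl hip) !(ipBr hip); lra.
Qed.

Lemma fitz_ub_ge x u c : fitz_ub x u c -> ip x u + (`|x| ^+ 2 + `|u| ^+ 2) / 2 <= c.
Proof.
move=> hQ; rewrite leNgt; apply/negP => hc.
have gx : G x u.
  apply: G_max => y v gy; have := hQ y v gy.
  by rewrite /fitz_term !(ipBl hip) !(ipBr hip) (ipC hip y u); lra.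
by have := hQ x u gx; rewrite /fitz_term; lra.
Qed.

Lemma fitz_ub_midpoint a1 a2 b1 b2 c1 c2 : fitz_ub a1 a2 c1 -> fitz_ub b1 b2 c2 ->
  fitz_ub (2^-1 *: (a1 + b1)) (2^-1 *: (a2 + b2))
    ((c1 + c2) / 2 - 8^-1 * (`|a1 - b1| ^+ 2 + `|a2 - b2| ^+ 2)).
Proof.
move=> h1 h2 y v g; have := h1 y v g; have := h2 y v g.
by rewrite /fitz_term !(sqr_norm_midpoint hip) !(ipZl hip) !(ipZr hip) !(ipDl hip) !(ipDr hip); lra.
Qed.

Lemma fitz_ub_closed xs us m :
  (forall e, 0 < e -> exists x u c,
     [/\ fitz_ub x u c, c <= m + e, `|x - xs| < e & `|u - us| < e]) ->
  fitz_ub xs us m.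
Proof.
move=> hclose y v g.
apply: (@le_of_le_add_small_mul _ _ _ (2 + `|v| + `|y| + `|xs| + `|us|)) => e e0 e1.
have [x [u [c [hQ hc hx hu]]]] := hclose e e0.
have h := hQ y v g.
have d1 : ip xs v - ip x v <= e * `|v|.
  rewrite -(ipBl hip); apply: le_trans (ip_le_normM hip _ _) _.
  by rewrite distrC ler_wpM2r // ltW.
have d2 : ip y us - ip y u <= e * `|y|.
  rewrite -(ipBr hip); apply: le_trans (ip_le_normM hip _ _) _.
  by rewrite mulrC distrC ler_wpM2r // ltW.
have d3 : forall a b : H, `|b - a| < e -> `|a| ^+ 2 - `|b| ^+ 2 <= e * (2 * `|a| + 1).
  move=> a b hab; rewrite (subr_sqr_norm hip); apply: le_trans (ip_le_normM hip _ _) _.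
  rewrite distrC; apply: ler_pM; rewrite ?normr_ge0 ?ltW //.
  have := ler_normD a b.
  have : `|b| <= `|a| + e by have := ler_normD a (b - a); rewrite addrC subrK; lra.
  lra.
have := d3 _ _ hx; have := d3 _ _ hu.
by rewrite /fitz_term in h *; lra.
Qed.

Lemma fitz_ub_convex xs us m y v t : fitz_ub xs us m -> G y v -> 0 < t -> t < 1 ->
  fitz_ub ((1 - t) *: xs + t *: y) ((1 - t) *: us + t *: v)
    ((1 - t) * m + t * (ip y v + (`|y| ^+ 2 + `|v| ^+ 2) / 2)
      - t * (1 - t) * (`|xs - y| ^+ 2 + `|us - v| ^+ 2) / 2).
Proof.
move=> hQ g t0 t1 y' v' g'.
have h1 := hQ y' v' g'; have h2 := fitz_term_graph g' g.
rewrite /fitz_term !(sqr_norm_convex hip) !(ipDl hip) !(ipDr hip) !(ipZl hip) !(ipZr hip) in h1 h2 *.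
have tt : 0 <= t * (1 - t) by rewrite mulr_ge0 ?ltW // subr_gt0.
nra.
Qed.

Lemma fitz_min_optimality xs us m : fitz_ub xs us m ->
  (forall x u c, fitz_ub x u c -> m <= c) -> forall y v, G y v ->
  ip xs us + `|xs| ^+ 2 + `|us| ^+ 2 <= ip y v + ip xs y + ip us v.
Proof.
move=> Qs hm y v g.
have Fs := fitz_ub_ge Qs.
suff : m <= ip y v + (`|y| ^+ 2 + `|v| ^+ 2) / 2 - (`|xs - y| ^+ 2 + `|us - v| ^+ 2) / 2.
  by rewrite !(sqr_normB hip); lra.
apply: (@le_of_le_add_small_mul _ _ _ ((`|xs - y| ^+ 2 + `|us - v| ^+ 2) / 2)) => t t0 t1.
have hmc := hm _ _ _ (fitz_ub_convex Qs g t0 t1).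
have : t * m <= t * (ip y v + (`|y| ^+ 2 + `|v| ^+ 2) / 2
    - (`|xs - y| ^+ 2 + `|us - v| ^+ 2) / 2 + t * ((`|xs - y| ^+ 2 + `|us - v| ^+ 2) / 2)).
  by lra.
by rewrite ler_pM2l.
Qed.

Theorem minty_zero : exists x, G x (- x).
Proof.
have [y0 [v0 g0]] : exists y v, G y v.
  case: (pselect (exists y v, G y v)) => // hn.
  by exists 0, 0; apply: G_max => y v g; exfalso; apply: hn; exists y, v.
have q0 : forall x u, 0 <= ip x u + (`|x| ^+ 2 + `|u| ^+ 2) / 2.
  by move=> x u; have := sqr_ge0 `|x + u|; rewrite (sqr_normD hip); lra.
have [xs [us [m [hm hclose]]]] := @midpoint_convex_approx_min R H fitz_ub 8^-1
  ltac:(by rewrite invr_gt0 ltr0n)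
  ltac:(by move=> ? ? ? ? ? ? h1 h2; eexists; split; first exact: fitz_ub_midpoint h1 h2)
  ltac:(by exists y0, v0, (ip y0 v0 + (`|y0| ^+ 2 + `|v0| ^+ 2) / 2) => y v g;
        rewrite lerD2r fitz_term_graph)
  ltac:(by exists 0 => x u c hQ; apply: le_trans (q0 x u) (fitz_ub_ge hQ)).
have Qs : fitz_ub xs us m := fitz_ub_closed hclose.
have opt := fitz_min_optimality Qs hm.
have key : forall y v, G y v -> `|xs + us| ^+ 2 <= ip ((- us) - y) ((- xs) - v).
  move=> y v g; have := opt y v g.
  by rewrite (sqr_normD hip) !(ipBl hip) !(ipBr hip) !(ipNl hip) !(ipNr hip)
    (ipC hip us xs) (ipC hip y xs); lra.
have gm : G (- us) (- xs).
  by apply: G_max => y v g; apply: le_trans (key y v g); exact: sqr_ge0.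
have := key _ _ gm; rewrite !subrr (ip0l hip) => h0.
have xus : xs + us = 0.
  by apply/normr0_eq0/eqP; rewrite -sqrf_eq0 eq_le sqr_ge0 andbT.
have us_eq : us = - xs by apply/eqP; rewrite -addr_eq0 addrC xus.
by exists xs; rewrite us_eq opprK in gm.
Qed.

End Minty.

Section MaximalMonotone.
Variables (R : realType) (H : completeNormedModType R) (ip : H -> H -> R).
Hypothesis hip : is_inner_product ip.
Variable A : H -> set H.
Hypothesis hA : maximally_monotone ip A.

Lemma maximal_monotone_mem x u :
  (forall y v, A y v -> 0 <= ip (x - y) (u - v)) -> A x u.
Proof.
case: hA => mon mx h.
pose A' y := A y `|` [set w | y = x /\ w = u].
have mon' : monotone_op ip A'.
  move=> x1 x2 u1 u2 [h1|[-> ->]] [h2|[-> ->]].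
  - exact: mon h1 h2.
  - by rewrite -(opprB x) -(opprB u) (ipNl hip) (ipNr hip) opprK; exact: h.
  - exact: h.
  - by rewrite !subrr (ip0l hip).
by rewrite -(mx A' mon' (fun y w hw => or_introl hw)); right.
Qed.

Lemma resolvent_exists (lam : R) (z : H) : 0 < lam ->
  exists p, A p (lam^-1 *: (z - p)).
Proof.
move=> l0.
pose G x w := A (x + z) (lam^-1 *: w).
have monG : forall x1 x2 u1 u2, G x1 u1 -> G x2 u2 -> 0 <= ip (x1 - x2) (u1 - u2).
  move=> x1 x2 u1 u2 h1 h2; have := hA.1 _ _ _ _ h1 h2.
  rewrite opprD addrACA subrr addr0 -scalerBr (ipZr hip).
  by rewrite pmulr_rge0 // invr_gt0.
have maxG : forall x w, (forall y v, G y v -> 0 <= ip (x - y) (w - v)) -> G x w.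
  move=> x w h; apply: maximal_monotone_mem => y' a ha.
  have g : G (y' - z) (lam *: a) by rewrite /G subrK scalerA mulVf ?gt_eqF // scale1r.
  have := h _ _ g.
  have -> : x - (y' - z) = x + z - y' by rewrite opprB addrA (addrAC x).
  have -> : w - lam *: a = lam *: (lam^-1 *: w - a).
    by rewrite scalerBr scalerA mulfV ?gt_eqF // scale1r.
  by rewrite (ipZr hip) pmulr_rge0.
have [x hx] := minty_zero hip monG maxG.
exists (x + z); move: hx; rewrite /G.
by rewrite opprD addrCA subrr addr0.
Qed.

(* Minty's trick: test the variational inequality against the resolvent point
   [p = J_{mu A}(q - mu D q)] with [mu < 1 / L]; this forces [p = q]. *)
Lemma variational_ineq_zero (D : H -> H) (L : R) (q : H) :
  0 <= L -> lipschitz_with L D ->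
  (forall y a, A y a -> 0 <= ip (q - y) (- a - D y)) -> A q (- D q).
Proof.
move=> L0 hD h.
have L1 : 0 < L + 1 by rewrite ltr_wpDl.
pose mu := (L + 1)^-1.
have mu0 : 0 < mu by rewrite invr_gt0.
have [p hp] := resolvent_exists (q - mu *: D q) mu0.
have ea : mu^-1 *: (q - mu *: D q - p) = mu^-1 *: (q - p) - D q.
  rewrite -addrA (addrC (- (mu *: D q))) addrA scalerDr scalerN scalerA mulVf ?gt_eqF //.
  by rewrite scale1r.
rewrite ea in hp.
have := h _ _ hp.
rewrite opprB !(ipBr hip) (ipZr hip) (ipxx hip) /mu invrK => hh.
have hc2 := lipschitz_ip_le hip hD (q - p) q p; rewrite (ipBr hip) in hc2.
have a0 := normr_ge0 (q - p).
have qp0 : `|q - p| = 0 by nra.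
have pq : p = q by apply/eqP; rewrite eq_sym -subr_eq0 -normr_eq0 qp0.
by move: hp; rewrite pq subrr scaler0 add0r.
Qed.

End MaximalMonotone.

Definition infinitely_often (P : nat -> Prop) := forall N, exists2 k, (N <= k)%N & P k.

Lemma infinitely_often_sub (P Q : nat -> Prop) : (forall k, P k -> Q k) ->
  infinitely_often P -> infinitely_often Q.
Proof. by move=> PQ iP N; have [k hk /PQ] := iP N; exists k. Qed.

Lemma infinitely_often_or (P Q : nat -> Prop) :
  infinitely_often (fun k => P k \/ Q k) -> infinitely_often P \/ infinitely_often Q.
Proof.
move=> iPQ; case: (pselect (infinitely_often P)) => [|nP]; [by left | right].
have [N0 hN0] : exists N0, forall k, (N0 <= k)%N -> ~ P k.
  apply: (contra_notP _ nP) => h N; apply: contra_notP h => hN.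
  by exists N => k hk Pk; apply: hN; exists k.
move=> N; have [k + [Pk|Qk]] := iPQ (maxn N N0); rewrite geq_max => /andP[kN kN0].
  by have := hN0 k kN0.
by exists k.
Qed.

Lemma infinitely_often_not_near (P : nat -> Prop) :
  ~ (\forall k \near \oo, P k) -> infinitely_often (fun k => ~ P k).
Proof.
move=> hn N; apply: contra_notP hn => hN; exists N => // k /= hk.
by apply: contra_notP hN => nPk; exists k.
Qed.

Lemma infinitely_oftenT : infinitely_often (fun _ => True).
Proof. by move=> N; exists N. Qed.

Section AsymptoticCenter.
Variables (R : realType) (H : completeNormedModType R) (ip : H -> H -> R).
Hypothesis hip : is_inner_product ip.
Variables (y : nat -> H) (M : R).
Hypothesis y_bounded : forall k, `|y k| <= M.

Definition asymp_ub (P : nat -> Prop) (v : H) (c : R) :=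
  forall e, 0 < e -> exists N, forall k, (N <= k)%N -> P k -> `|y k - v| ^+ 2 <= c + e.

Definition asymp_center (P : nat -> Prop) (v : H) (m : R) :=
  (forall w c, asymp_ub P w c -> m <= c) /\ asymp_ub P v m.

Definition sqr_dist_cvg (v : H) (rho : R) :=
  forall e, 0 < e -> exists N, forall k, (N <= k)%N -> `| `|y k - v| ^+ 2 - rho| <= e.

Lemma asymp_ub_midpoint P a b c1 c2 : asymp_ub P a c1 -> asymp_ub P b c2 ->
  asymp_ub P (2^-1 *: (a + b)) ((c1 + c2) / 2 - `|a - b| ^+ 2 / 4).
Proof.
move=> h1 h2 e e0.
have [N1 hN1] := h1 e e0; have [N2 hN2] := h2 e e0.
exists (maxn N1 N2) => k; rewrite geq_max => /andP[k1 k2] Pk.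
have yy : 2^-1 *: (y k + y k) = y k.
  by rewrite -mulr2n -[y k *+ 2]scaler_nat scalerA mulVf ?pnatr_eq0 // scale1r.
have -> : y k - 2^-1 *: (a + b) = 2^-1 *: ((y k - a) + (y k - b)).
  by rewrite addrACA -opprD scalerBr yy.
rewrite (sqr_norm_midpoint hip).
have -> : (y k - a) - (y k - b) = b - a by rewrite opprB addrC addrA subrK.
rewrite (distrC b a).
by have := hN1 k k1 Pk; have := hN2 k k2 Pk; lra.
Qed.

Lemma asymp_ub_ge0 P v c : infinitely_often P -> asymp_ub P v c -> 0 <= c.
Proof.
move=> iP h; apply/ler_addgt0Pr => e e0.
have [N hN] := h e e0; have [k hk Pk] := iP N.
by apply: le_trans (hN k hk Pk); exact: sqr_ge0.
Qed.

Lemma asymp_ub_le P v c c' : asymp_ub P v c -> c <= c' -> asymp_ub P v c'.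
Proof.
move=> h hc e e0; have [N hN] := h e e0; exists N => k hk Pk.
by apply: le_trans (hN k hk Pk) _; rewrite lerD2r.
Qed.

Lemma asymp_ub_of_cvg P v rho : sqr_dist_cvg v rho -> asymp_ub P v rho.
Proof.
move=> h e e0; have [N hN] := h e e0; exists N => k hk _.
by have := hN k hk; rewrite ler_norml => /andP[_ h2]; lra.
Qed.

Lemma cvg_le_asymp_ub P v rho c : infinitely_often P ->
  sqr_dist_cvg v rho -> asymp_ub P v c -> rho <= c.
Proof.
move=> iP h1 h2; apply/ler_addgt0Pr => e e0.
have e20 : 0 < e / 2 by rewrite divr_gt0.
have [N1 hN1] := h1 _ e20; have [N2 hN2] := h2 _ e20.
have [k + Pk] := iP (maxn N1 N2); rewrite geq_max => /andP[k1 k2].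
have := hN1 k k1; rewrite ler_norml => /andP[h3 _].
by have := hN2 k k2 Pk; lra.
Qed.

Lemma asymp_center_exists P : infinitely_often P -> exists v m, asymp_center P v m.
Proof.
move=> iP.
pose Q (v w : H) c := w = 0 /\ asymp_ub P v c.
have M0 : 0 <= M by apply: le_trans (y_bounded 0%N); exact: normr_ge0.
have [vs [ws [m [hm hcl]]]] := @midpoint_convex_approx_min R H Q (4^-1)
  ltac:(by rewrite invr_gt0 ltr0n)
  ltac:(move=> a1 a2 b1 b2 c1 c2 [-> h1] [-> h2];
        exists ((c1 + c2) / 2 - `|a1 - b1| ^+ 2 / 4); split;
        [split; [by rewrite addr0 scaler0 | exact: asymp_ub_midpoint] |
         rewrite subr0 normr0; lra])
  ltac:(exists 0, 0, (M ^+ 2); split => // e e0; exists 0%N => k _ _;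
        rewrite subr0; have := y_bounded k; have := normr_ge0 (y k); nra)
  ltac:(by exists 0 => v w c [_ h]; exact: asymp_ub_ge0 iP h).
exists vs, m; split; first by move=> v c h; apply: (hm v 0).
move=> e e0.
pose K := 2 * (M + `|vs| + 1) + 3.
have K0 : 0 <= K by rewrite /K; have := normr_ge0 vs; lra.
have [eta [eta0 eta1 hK]] := exists_small_mul_le K0 (divr_gt0 e0 (ltr0n _ 2)).
have [v [w [c [[_ hQ] hc hv _]]]] := hcl eta eta0.
have [N hN] := hQ eta eta0.
exists N => k hk Pk.
have h1 := hN k hk Pk.
have h2 : `|y k - vs| <= `|y k - v| + eta.
  by have := ler_normD (y k - v) (v - vs); rewrite addrA subrK; lra.
have h3 : `|y k - v| <= M + `|vs| + 1.
  have := ler_normD (y k) (- v); rewrite normrN.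
  have := ler_normD vs (v - vs); rewrite addrC subrK.
  by have := y_bounded k; lra.
have := normr_ge0 (y k - vs); have := normr_ge0 (y k - v).
move: h1 h2 h3 hK; rewrite /K.
move: `|y k - vs| `|y k - v| => a b h1 h2 h3 hK a0 b0.
have hb : 2 * eta * b <= 2 * eta * (M + `|vs| + 1).
  by apply: ler_wpM2l => //; rewrite mulr_ge0 // ltW.
have : a ^+ 2 <= b ^+ 2 + 2 * eta * b + eta * eta by nra.
have : eta * eta <= eta by rewrite -{3}(mulr1 eta) ler_pM2l.
lra.
Qed.

(* Moving the center by [s t] towards a half-space [{<., t> >= beta}] that
   eventually contains [y k] would lower the asymptotic radius by [s delta]. *)
Lemma asymp_center_halfspace P vs m t beta :
  infinitely_often P -> asymp_center P vs m ->
  (forall e, 0 < e -> exists N, forall k, (N <= k)%N -> P k -> beta - e <= ip (y k) t) ->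
  beta <= ip vs t.
Proof.
move=> iP [hm hvs] hb.
rewrite leNgt; apply/negP => hlt.
have [t0|tn] := eqVneq t 0.
  move: hlt; rewrite t0 (ip0r hip) => b0.
  have [N hN] := hb _ (divr_gt0 b0 (ltr0n _ 2)); have [k hk Pk] := iP N.
  by have := hN k hk Pk; rewrite t0 (ip0r hip); lra.
pose delta := beta - ip vs t.
have d0 : 0 < delta by rewrite subr_gt0.
have tau0 : 0 < `|t| ^+ 2 by rewrite exprn_gt0 // normr_gt0.
pose s := delta / `|t| ^+ 2.
have s0 : 0 < s by rewrite divr_gt0.
have hd : forall e, 0 < e -> asymp_ub P (vs + s *: t) (m - s * delta + (2 * s + 1) * e).
  move=> e e0 e' e'0.
  have [N1 hN1] := hvs e e0; have [N2 hN2] := hb e e0.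
  exists (maxn N1 N2) => k; rewrite geq_max => /andP[k1 k2] Pk.
  rewrite opprD addrA (sqr_normB hip) (ipZr hip) (ipBl hip) normrZ exprMn gtr0_norm //.
  have -> : s ^+ 2 * `|t| ^+ 2 = s * delta.
    by rewrite /s; field; rewrite normr_eq0.
  have := hN1 k k1 Pk; have := hN2 k k2 Pk; rewrite /delta.
  move: (ip (y k) t) (ip vs t) (`|y k - vs| ^+ 2) => p q r h1 h2.
  have : s * (beta - e) <= s * p by rewrite ler_wpM2l // ltW.
  lra.
have : s * delta <= 0.
  apply: (@le_of_le_add_small_mul _ _ _ (2 * s + 1)) => e e0 _.
  by have := hm _ _ (hd e e0); lra.
by have := mulr_gt0 s0 d0; lra.
Qed.

Section Opial.
Variable Z : H -> Prop.
Hypothesis Z_center : forall P v m, infinitely_often P -> asymp_center P v m -> Z v.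
Hypothesis Z_cvg : forall z, Z z -> exists rho, sqr_dist_cvg z rho.

(* Two asymptotic centers in [Z] must coincide: each sees the other's limit
   distance as an upper bound, and the midpoint would otherwise do better. *)
Lemma asymp_center_not_separated P c m t e :
  asymp_center (fun _ => True) c m -> infinitely_often P -> 0 < e ->
  ~ (forall k, P k -> ip c t + e <= ip (y k) t).
Proof.
move=> [hm hc] iP e0 hP.
have Zc : Z c := Z_center infinitely_oftenT (conj hm hc).
have [c' [m' [hm' hc']]] := asymp_center_exists iP.
have Zc' : Z c' := Z_center iP (conj hm' hc').
have hs : ip c t + e <= ip c' t.
  apply: (asymp_center_halfspace iP (conj hm' hc')) => e' e'0; exists 0%N => k _ Pk.
  by have := hP k Pk; lra.
have [rho hrho] := Z_cvg Zc; have [rho' hrho'] := Z_cvg Zc'.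
have i1 := cvg_le_asymp_ub infinitely_oftenT hrho hc.
have i2 := hm c' rho' (asymp_ub_of_cvg _ hrho').
have i3 := cvg_le_asymp_ub iP hrho' hc'.
have i4 := hm' c rho (asymp_ub_of_cvg _ hrho).
have hc'm : asymp_ub (fun _ => True) c' m 
  by apply: asymp_ub_le (asymp_ub_of_cvg _ hrho') _; lra.
have := hm _ _ (asymp_ub_midpoint hc hc'm).
have := sqr_ge0 `|c - c'| => h1 h2.
have : `|c - c'| ^+ 2 = 0 by lra.
move/eqP; rewrite sqrf_eq0 normr_eq0 subr_eq0 => /eqP ecc.
by rewrite -ecc in hs; lra.
Qed.

Lemma opial : exists p, Z p /\ weakly_converges ip y p.
Proof.
have [c [m hcm]] := asymp_center_exists infinitely_oftenT.
exists c; split; first exact: Z_center infinitely_oftenT hcm.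
move=> w; apply/cvgrPdist_le => e e0; apply: contrapT => /infinitely_often_not_near far.
have : infinitely_often (fun k =>
    ip c w + e <= ip (y k) w \/ ip c (- w) + e <= ip (y k) (- w)).
  apply: infinitely_often_sub far => k /negP; rewrite -ltNge ltr_normr !(ipNr hip).
  by case/orP => h; [right | left]; lra.
by move/infinitely_often_or => - [] io; apply: (asymp_center_not_separated hcm io e0) => k; exact: id.
Qed.

End Opial.
End AsymptoticCenter.

Section ForwardReflectedBackward.
Variables (R : realType) (H : completeNormedModType R) (ip : H -> H -> R).
Variables (A : H -> set H) (B C : H -> H) (L1 L2 lam : R) (y : nat -> H).
Hypotheses (hip : is_inner_product ip) (hA : maximally_monotone ip A)
  (hB : monotone_fun ip B) (hL1 : 0 <= L1) (hBL : lipschitz_with L1 B)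
  (hL2 : 0 < L2) (hC : cocoercive_inv ip L2 C) (hlam : 0 < lam)
  (hlam2 : lam < 2 / (4 * L1 + L2)).
Hypothesis hy : forall k, in_resolvent lam A
  (y k.+1 - (2 * lam) *: B (y k.+1) + lam *: B (y k) - lam *: C (y k.+1)) (y k.+2).

Definition lyap (z : H) k :=
  `|y k.+1 - z| ^+ 2 - 2 * lam * ip (B (y k.+1) - B (y k)) (y k.+1 - z)
  + lam * L1 * `|y k.+1 - y k| ^+ 2.

Lemma step_size_bounds : 0 < 1 - lam * (4 * L1 + L2) / 2 /\ lam * L1 < 2^-1.
Proof.
have d0 : 0 < 4 * L1 + L2 by have := hL1; have := hL2; lra.
move: hlam2; rewrite ltr_pdivlMr // => h.
have : 0 <= lam * L1 by rewrite mulr_ge0 // ltW.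
have : 0 < lam * L2 by rewrite mulr_gt0.
by split; lra.
Qed.

Lemma lyap_decrease z k : zero_ABC A B C z ->
  lyap z k.+1 <= lyap z k - (1 - lam * (4 * L1 + L2) / 2) * `|y k.+2 - y k.+1| ^+ 2.
Proof.
move=> [az [Az ez]]; have [u [Au eq]] := hy k; rewrite /lyap.
move: eq Au; set a := y k.+2; set b := y k.+1; set c := y k => eq Au.
set P := a - z.
have mA : 0 <= lam * (ip P u - ip P az).
  by rewrite -(ipBr hip); apply: mulr_ge0; [exact: ltW | exact: hA.1].
have mB : 0 <= lam * (ip P (B a) - ip P (B z)).
  by rewrite -(ipBr hip); apply: mulr_ge0; [exact: ltW | exact: hB].
have E1 := congr1 (ip P) eq; rewrite !(ipDr hip) !(ipNr hip) !(ipZr hip) in E1.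
have E2 := congr1 (ip P) ez; rewrite !(ipDr hip) (ip0r hip) in E2.
have E2' : lam * ip P az = lam * (- ip P (B z) - ip P (C z)) by congr (_ * _); lra.
have G0 : 0 <= ip P (b - a) + lam * ip P (B a - B b) - lam * ip P (B b - B c)
    - lam * ip P (C b - C z).
  by rewrite !(ipBr hip); lra.
have G1 := ip_three_point hip a b z.
have Pd : P = (b - z) + (a - b) by rewrite addrC addrA subrK.
have G2 : ip P (B b - B c) = ip (B b - B c) (b - z) + ip (a - b) (B b - B c).
  by rewrite Pd (ipDl hip) (ipC hip (b - z)).
have G3 := ler_wpM2l (ltW hlam) (lipschitz_ip_ge hip hL1 hBL (a - b) b c).
have G4 : ip P (C b - C z) = ip (b - z) (C b - C z) + ip (a - b) (C b - C z).
  by rewrite Pd (ipDl hip).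
have G5 := ler_wpM2l (ltW hlam) (cocoercive_ip_ge hip hL2 hC (a - b) b z).
rewrite (ipC hip P (B a - B b)) G2 G4 in G0.
rewrite /P in G0; lra.
Qed.

Lemma lyap_lower_bound z k : (1 - lam * L1) * `|y k.+1 - z| ^+ 2 <= lyap z k.
Proof.
rewrite /lyap.
have := ler_wpM2l (ltW hlam) (lipschitz_ip_ge hip hL1 hBL (- (y k.+1 - z)) (y k.+1) (y k)).
rewrite (ipNl hip) normrN (ipC hip).
by move: (ip (B (y k.+1) - B (y k)) (y k.+1 - z)) `|y k.+1 - z| `|y k.+1 - y k| => r p q h; lra.
Qed.

Lemma sqr_dist_lyap_gap z k (M eta : R) :
  `|y k.+1 - z| <= M -> `|y k.+1 - y k| <= eta -> eta <= 1 ->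
  `| `|y k.+1 - z| ^+ 2 - lyap z k| <= lam * L1 * (2 * M + 1) * eta.
Proof.
move=> hM heta eta1; rewrite /lyap.
have lL1 : 0 <= lam * L1 by rewrite mulr_ge0 // ltW.
have up := lipschitz_ip_le hip hBL (y k.+1 - z) (y k.+1) (y k).
have lo := lipschitz_ip_le hip hBL (- (y k.+1 - z)) (y k.+1) (y k).
rewrite (ipNl hip) normrN in lo; rewrite (ipC hip) in up lo.
have := normr_ge0 (y k.+1 - y k); have := normr_ge0 (y k.+1 - z).
move: (ip (B (y k.+1) - B (y k)) (y k.+1 - z)) `|y k.+1 - z| `|y k.+1 - y k| hM heta up lo => r p q hM heta up lo p0 q0.
have pq : p * (L1 * q) <= L1 * (M * eta) by rewrite mulrCA ler_wpM2l // ler_pM.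
have qq : q ^+ 2 <= eta by rewrite expr2 -[eta]mul1r ler_pM // (le_trans heta).
have := ler_wpM2l (ltW hlam) up; have := ler_wpM2l (ltW hlam) lo.
have := ler_wpM2l (ltW hlam) pq; have := ler_wpM2l lL1 qq.
have := mulr_ge0 lL1 (sqr_ge0 q).
rewrite ler_norml; move=> *; apply/andP; split; nra.
Qed.

Section Fejer.
Variable z : H.
Hypothesis hz : zero_ABC A B C z.

Lemma lyap_nonincreasing : nonincreasing_seq (lyap z).
Proof.
apply/nonincreasing_seqP => k; have := lyap_decrease k hz.
have [d0 _] := step_size_bounds.
have := mulr_ge0 (ltW d0) (sqr_ge0 `|y k.+2 - y k.+1|); lra.
Qed.

Lemma lyap_ge0 k : 0 <= lyap z k.
Proof.
apply: le_trans (lyap_lower_bound z k); rewrite mulr_ge0 ?sqr_ge0 //.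
by have [_ ?] := step_size_bounds; lra.
Qed.

Lemma dist_zero_bounded : exists M, forall k, `|y k.+1 - z| <= M.
Proof.
have [_ lL1] := step_size_bounds.
have p0 : 0 < 1 - lam * L1 by lra.
exists (1 + lyap z 0 / (1 - lam * L1)) => k.
have : `|y k.+1 - z| ^+ 2 <= lyap z 0 / (1 - lam * L1).
  rewrite ler_pdivlMr // mulrC; apply: le_trans (lyap_lower_bound z k) _.
  exact: lyap_nonincreasing.
have := normr_ge0 (y k.+1 - z).
by move: `|y k.+1 - z| (lyap z 0 / _) => a b ha hb; nra.
Qed.

Let l := inf (range (lyap z)).

Lemma lyap_has_inf : has_inf (range (lyap z)).
Proof. by split; [exists (lyap z 0), 0 | exists 0 => _ [k _ <-]; exact: lyap_ge0]. Qed.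

Lemma lyap_ge_inf k : l <= lyap z k.
Proof. by apply: (ge_inf lyap_has_inf.2); exists k. Qed.

Lemma lyap_inf_eventually e : 0 < e ->
  exists N, forall k, (N <= k)%N -> lyap z k <= l + e.
Proof.
move=> e0; have [_ [N _ <-] hN] := inf_adherent e0 lyap_has_inf.
by exists N => k hk; apply: le_trans (ltW hN); exact: lyap_nonincreasing.
Qed.

Lemma successive_diff_vanish e : 0 < e ->
  exists N, forall k, (N <= k)%N -> `|y k.+1 - y k| <= e.
Proof.
move=> e0; have [d0 _] := step_size_bounds.
have [N hN] := lyap_inf_eventually (mulr_gt0 (mulr_gt0 e0 e0) d0).
exists N.+1 => -[//|k] /= hk.
rewrite -(ler_sqr (normr_ge0 _) (ltW e0)) -(ler_pM2l d0) [_ * (e ^+ 2)]mulrC expr2.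
have := lyap_decrease k hz; have := hN k hk; have := lyap_ge_inf k.+1; lra.
Qed.

Lemma sqr_dist_zero_cvg : sqr_dist_cvg y z l.
Proof.
move=> e e0.
have [M hM] := dist_zero_bounded.
have M0 : 0 <= M by apply: le_trans (hM 0%N); exact: normr_ge0.
have K0 : 0 <= lam * L1 * (2 * M + 1) by rewrite !mulr_ge0 ?addr_ge0 ?mulr_ge0 // ltW.
have e20 : 0 < e / 2 by rewrite divr_gt0.
have [eta [eta0 eta1 hK]] := exists_small_mul_le K0 e20.
have [N1 hN1] := successive_diff_vanish eta0.
have [N2 hN2] := lyap_inf_eventually e20.
exists (maxn N1 N2).+1 => -[//|k]; rewrite ltnS geq_max => /andP[k1 k2].
have := sqr_dist_lyap_gap (hM k) (hN1 k k1) eta1.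
have := hN2 k k2; have := lyap_ge_inf k.
rewrite mulrC in hK; rewrite !ler_norml => h1 h2 /andP[h3 h4].
by apply/andP; split; lra.
Qed.

End Fejer.

Lemma resolvent_residual_ge j y' a : A y' a ->
  - (`|y j.+2 - y'| * ((1 + lam * L1 + lam * L2) * `|y j.+2 - y j.+1|
                       + lam * L1 * `|y j.+1 - y j|))
  <= lam * ip (y j.+2 - y') (- a - (B y' + C y')).
Proof.
move=> Ay'; have [u [Au eq]] := hy j.
move: eq Au; set a2 := y j.+2; set b := y j.+1; set c := y j => eq Au.
set X := a2 - y'.
have mA := mulr_ge0 (ltW hlam) (hA.1 _ _ _ _ Au Ay' : 0 <= ip X (u - a)).
have mD := mulr_ge0 (ltW hlam) (monotoneD_cocoercive hip hL2 hB hC a2 y').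
have E1 := congr1 (ip X) eq; rewrite !(ipDr hip) !(ipNr hip) !(ipZr hip) in E1.
have b1 : ip X (b - a2) <= `|X| * `|a2 - b| by rewrite (distrC a2 b) (ip_le_normM hip).
have b2 := ler_wpM2l (ltW hlam) (lipschitz_ip_le hip hBL X a2 b).
have b3 := ler_wpM2l (ltW hlam) (lipschitz_ip_le hip hBL (- X) b c).
have b4 := ler_wpM2l (ltW hlam)
  (lipschitz_ip_le hip (cocoercive_lipschitz hip hL2 hC) X a2 b).
rewrite (ipNl hip) normrN in b3.
rewrite !(ipBr hip) !(ipDr hip) in mA mD b1 b2 b3 b4 *; rewrite (ipNr hip).
rewrite -/X in mD *; lra.
Qed.

Hypothesis zero_exists : exists z, zero_ABC A B C z.

Lemma iterates_bounded : exists M, forall k, `|y k| <= M.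
Proof.
have [z hz] := zero_exists; have [M hM] := dist_zero_bounded hz.
have M0 : 0 <= M := le_trans (normr_ge0 _) (hM 0%N).
have z0 := normr_ge0 z; have y0 := normr_ge0 (y 0%N).
exists (`|y 0%N| + M + `|z|) => -[|k]; first lra.
by have := ler_normD (y k.+1 - z) z; rewrite subrK; have := hM k; lra.
Qed.

Lemma asymp_variational_ineq y' a : A y' a -> forall e, 0 < e ->
  exists N, forall k, (N <= k)%N -> - e <= ip (y k - y') (- a - (B y' + C y')).
Proof.
move=> Ay' e e0.
have [M hM] := iterates_bounded.
have M0 : 0 <= M := le_trans (normr_ge0 _) (hM 0%N).
have lL1 : 0 <= lam * L1 by rewrite mulr_ge0 // ltW.
have lL2 : 0 <= lam * L2 by rewrite mulr_ge0 // ltW.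
pose K := 1 + 2 * lam * L1 + lam * L2.
have K0 : 0 <= (M + `|y'|) * K by rewrite mulr_ge0 ?addr_ge0 // /K; lra.
have [eta [eta0 _ hK]] := exists_small_mul_le K0 (mulr_gt0 hlam e0).
have [z hz] := zero_exists.
have [N hN] := successive_diff_vanish hz eta0.
exists N.+2 => -[|[|j]] // /= hj.
rewrite -(ler_pM2l hlam) mulrN; apply: le_trans _ (resolvent_residual_ge j Ay'); rewrite lerN2.
have hX : `|y j.+2 - y'| <= M + `|y'|.
  by apply: le_trans (ler_normD _ _) _; rewrite normrN lerD2r.
have d1 := hN j.+1 (leqW hj); have d2 := hN j hj.
have hres : (1 + lam * L1 + lam * L2) * `|y j.+2 - y j.+1| + lam * L1 * `|y j.+1 - y j|
    <= eta * K.
  rewrite /K; have := ler_wpM2l lL1 d2; have := ler_wpM2l lL2 d1; have := ler_wpM2l lL1 d1.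
  lra.
apply: le_trans (ler_pM (normr_ge0 _) _ hX hres) _; last by rewrite mulrCA.
by apply: addr_ge0; apply: mulr_ge0 => //; lra.
Qed.

Lemma asymp_center_zero P v m : infinitely_often P -> asymp_center y P v m ->
  zero_ABC A B C v.
Proof.
move=> iP hc.
have hD := lipschitzD hBL (cocoercive_lipschitz hip hL2 hC).
have L0 : 0 <= L1 + L2 by have := hL1; have := hL2; lra.
exists (- (B v + C v)); split; last by rewrite -addrA addNr.
apply: (variational_ineq_zero hip hA L0 hD) => y' a Ay'.
rewrite (ipBl hip) subr_ge0; apply: (asymp_center_halfspace hip iP hc) => e e0.
have [N hN] := asymp_variational_ineq Ay' e0; exists N => k hk _.
by have := hN k hk; rewrite (ipBl hip); lra.
Qed.

Theorem iterates_weak_cvg : exists p, zero_ABC A B C p /\ weakly_converges ip y p.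
Proof.
have [M hM] := iterates_bounded.
apply: (opial hip hM) => [P v m iP hc | z hz]; first exact: asymp_center_zero iP hc.
by exists (inf (range (lyap z))); exact: sqr_dist_zero_cvg.
Qed.

End ForwardReflectedBackward.

Theorem theorem5p2 (R : realType) (H : completeNormedModType R)
  (ip : H -> H -> R) (A : H -> set H) (B C : H -> H) (L1 L2 lam : R)
  (x : nat -> H) (xm1 : H) :
  is_inner_product ip ->
  maximally_monotone ip A ->
  monotone_fun ip B -> 0 <= L1 -> lipschitz_with L1 B ->
  0 < L2 -> cocoercive_inv ip L2 C ->
  (exists z, zero_ABC A B C z) ->
  0 < lam -> lam < 2 / (4 * L1 + L2) ->
  in_resolvent lam A
    (x 0%N - (2 * lam) *: B (x 0%N) + lam *: B xm1 - lam *: C (x 0%N)) (x 1%N) ->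
  (forall k : nat, in_resolvent lam A
    (x k.+1 - (2 * lam) *: B (x k.+1) + lam *: B (x k) - lam *: C (x k.+1))
    (x k.+2)) ->
  exists p, zero_ABC A B C p /\ weakly_converges ip x p.
Proof.
move=> hip hA hB hL1 hBL hL2 hC hz hlam hlam2 h0 hxk.
pose y k := if k is k'.+1 then x k' else xm1.
have hy : forall k, in_resolvent lam A
    (y k.+1 - (2 * lam) *: B (y k.+1) + lam *: B (y k) - lam *: C (y k.+1)) (y k.+2).
  by case.
have [p [zp hp]] := iterates_weak_cvg hip hA hB hL1 hBL hL2 hC hlam hlam2 hy hz.
by exists p; split => // w; have := hp w; rewrite -cvg_shiftS.
Qed.
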